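(* Let $\mathcal{G}=\langle S,A,T,s_0,F\rangle$ be a two-player turn-based deterministic reachability game and let $X,Y\subseteq\mathrm{Win}_2(\mathcal{G},F)\setminus F$ with $X\cap Y=\emptyset$. Let $s\in\mathrm{Win}_2(\mathcal{G},F)$ and let $\pi_1$ be a memoryless deterministic P1 strategy in the hypergame on graph $\widehat{\mathcal{H}}_1(X,Y)$ that is sure winning for P1 (for reaching $X\cup Y$) from $s$. Then $\pi_1$ (extended arbitrarily to P1 states outside $\mathrm{Win}_2(\mathcal{G},F)$) is a stealthy deceptive sure winning strategy for P1 at $s$.
   Context: A two-player turn-based deterministic reachability game is a tuple $\mathcal{G}=\langle S,A,T,s_0,F\rangle$: $S$ finite, partitioned into P1 states $S_1$ and P2 states $S_2$; $A=A_1\cup A_2$ (P1 and P2 actions); $T:(S_1\times A_1)\cup(S_2\times A_2)\to S$ deterministic, possibly partial ($a$ enabled at $s$ iff $T(s,a)$ defined; every state has an enabled action); $s_0$ initial; $F\subseteq S$ a set of sink states (P2's goal). For a target $R\subseteq S$: $Z_0=R$, $Z_{k+1}=Z_k\cup\{s\in S_1:T(s,a)\in Z_k\ \forall\text{ enabled }a\}\cup\{s\in S_2:T(s,a)\in Z_k\text{ for some enabled }a\}$; $\mathrm{Win}_2(\mathcal{G},R)=\bigcup_kZ_k$; $\mathrm{rank}_{\mathcal{G},R}(s)=\min\{k:s\in Z_k\}$ ($\infty$ if none). For disjoint traps $X$ and fake targets $Y$: the true game $\mathcal{G}^1_{X,Y}$ has states $S$, transitions $T_{X,Y}(q,a)=T(q,a)$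 if $q\notin X\cup Y$ and $T_{X,Y}(q,a)=q$ if $q\in X\cup Y$, goal $F$; P2's perceptual game $\mathcal{G}^2_{X,Y}$ has transitions $T$ and goal $F\cup Y$, with ranks $\mathrm{rank}_{\mathcal{G}^2_{X,Y}}:=\mathrm{rank}_{\mathcal{G},F\cup Y}$. Subjectively rationalizable (sure-winning, greedy) actions: for $q\in S_2\cap\mathrm{Win}_2(\mathcal{G},F)\setminus(F\cup Y)$, $\mathsf{SRActs}_{X,Y}(q)=\{a\text{ enabled at }q:\mathrm{rank}_{\mathcal{G}^2_{X,Y}}(T(q,a))<\mathrm{rank}_{\mathcal{G}^2_{X,Y}}(q)\}$; at every other state, all enabled actions. A memoryless deterministic strategy $\pi$ of either player (a map from that player's states to enabled actions) is subjectively rationalizable if $\pi(q)\in\mathsf{SRActs}_{X,Y}(q)$ at all of that player's states. Given strategies $\pi_1,\pi_2$ and a state $s$, $\mathsf{Outcomes}(s,\pi_1,\pi_2)$ in a game is the set of paths from $s$ generated by following the strategies. A memoryless deterministic P1 strategy $\pi_1$ is stealthy deceptive sure winning at $s$ if it is subjectively rationalizable and, for every subjectively rationalizable memoryless deterministic P2 strategy $\pi_2$, every path in $\mathsf{Outcomes}(s,\pi_1,\pi_2)$ in the true game $\mathcal{G}^1_{X,Y}$ visits $X\cup Y$ within finitely many steps. The hypergame on graph $\widehat{\mathcal{H}}_1(X,Y)=\langle\mathrm{Win}_2(\mathcal{G},F),A,\widehat T_{X,Y},s_0,X\cup Y\rangle$ is the turn-based game with state set $\mathrm{Win}_2(\mathcal{G},F)$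 (inheriting the P1/P2 partition), $\widehat T_{X,Y}(q,a)=T(q,a)$ if $a\in\mathsf{SRActs}_{X,Y}(q)$ and undefined otherwise, in which P1 aims to reach $X\cup Y$ and P2 aims to avoid it; a P1 strategy is sure winning from $s$ in it if, for every P2 strategy in $\widehat{\mathcal{H}}_1(X,Y)$, every resulting path from $s$ visits $X\cup Y$ within finitely many steps. *)

From mathcomp Require Import all_boot.
From Stdlib Require Import ClassicalEpsilon.
Set Implicit Arguments. Unset Strict Implicit. Unset Printing Implicit Defensive.

(* A game <S, A, T, s0, F>: S1 = P1 states (P2 states are the complement),
   A1 = P1 actions (P2 actions are the complement), T partial via option. *)
Record game (S A : finType) := Game {
  S1 : {set S};
  A1 : {set A};
  T  : S -> A -> option S;
  s0 : S;
  F  : {set S}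
}.

Section Defs.
Variables (S A : finType) (G : game S A).

Definition enabled (s : S) (a : A) : bool := T G s a != None.

Definition wf_game : Prop :=
  (forall s, exists a, enabled s a) /\
  (forall s a, enabled s a -> (a \in A1 G) = (s \in S1 G)) /\
  (forall f a t, f \in F G -> T G f a = Some t -> t = f).

Definition succ_in (s : S) (a : A) (Z : {set S}) : bool :=
  if T G s a is Some t then t \in Z else false.

Fixpoint Zk (R : {set S}) (k : nat) : {set S} :=
  match k with
  | 0 => R
  | k'.+1 => let Z := Zk R k' in
      Z :|: [set s | if s \in S1 G
                     then [forall a, enabled s a ==> succ_in s a Z]
                     else [exists a, succ_in s a Z]]
  end.

Definition in_Win2 (R : {set S}) (s : S) : Prop := exists k, s \in Zk R k.

(* rank_{G,R}(s), with None standing for infinity *)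
Definition rank (R : {set S}) (s : S) : option nat :=
  match excluded_middle_informative (exists k, s \in Zk R k) with
  | left H => Some (ex_minn H)
  | right _ => None
  end.

Definition rank_lt (r1 r2 : option nat) : Prop :=
  match r1, r2 with
  | Some m, Some n => m < n
  | Some _, None => True
  | None, _ => False
  end.

Definition SRAct (X Y : {set S}) (q : S) (a : A) : Prop :=
  enabled q a /\
  ((q \notin S1 G /\ in_Win2 (F G) q /\ q \notin F G :|: Y) ->
     exists t, T G q a = Some t /\
       rank_lt (rank (F G :|: Y) t) (rank (F G :|: Y) q)).

(* Memoryless deterministic strategies are total maps S -> A; only their
   values at the owner's states matter. *)
Definition SR_P1 (X Y : {set S}) (pi1 : S -> A) : Prop :=
  forall q, q \in S1 G -> SRAct X Y q (pi1 q).
Definition SR_P2 (X Y : {set S}) (pi2 : S -> A) : Prop :=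
  forall q, q \notin S1 G -> SRAct X Y q (pi2 q).

Definition TXY (X Y : {set S}) (q : S) (a : A) : option S :=
  if q \in X :|: Y then (if T G q a is Some _ then Some q else None)
  else T G q a.

Definition joint (pi1 pi2 : S -> A) (q : S) : A :=
  if q \in S1 G then pi1 q else pi2 q.

Definition true_outcome (X Y : {set S}) (pi1 pi2 : S -> A) (s : S)
    (rho : nat -> S) : Prop :=
  rho 0 = s /\
  forall n, TXY X Y (rho n) (joint pi1 pi2 (rho n)) = Some (rho n.+1).

Definition stealthy_deceptive_sure_winning (X Y : {set S}) (pi1 : S -> A)
    (s : S) : Prop :=
  SR_P1 X Y pi1 /\
  forall pi2 : S -> A, SR_P2 X Y pi2 ->
  forall rho, true_outcome X Y pi1 pi2 s rho ->
  exists n, rho n \in X :|: Y.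

(* one move of the hypergame on graph H_1(X,Y) (state set Win_2(G,F),
   transitions T restricted to SR actions), with P1 playing pi1 *)
Definition hyp_step (X Y : {set S}) (pi1 : S -> A) (q q' : S) : Prop :=
  in_Win2 (F G) q /\ in_Win2 (F G) q' /\
  exists a, SRAct X Y q a /\ T G q a = Some q' /\
            (q \in S1 G -> a = pi1 q).

(* pi1 is sure winning from s in H_1(X,Y): every play from s consistent with
   pi1 (against any P2 strategy of the hypergame) visits X :|: Y *)
Definition hyp_sure_winning (X Y : {set S}) (pi1 : S -> A) (s : S) : Prop :=
  forall rho : nat -> S, rho 0 = s ->
  (forall n, hyp_step X Y pi1 (rho n) (rho n.+1)) ->
  exists n, rho n \in X :|: Y.

End Defs.

(* Until a play of the true game reaches X ∪ Y it follows T, and subjectively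
   rationalizable actions never leave Win_2(G, F) along it: P1 moves and moves
   out of the sinks F stay inside, and a P2 action that strictly decreases the
   rank towards F ∪ Y leads into Win_2(G, F ∪ Y), which lies inside
   Win_2(G, F) because Y does.  A play avoiding X ∪ Y forever would therefore
   be a play of the hypergame on graph consistent with pi1, contradicting that
   pi1 is sure winning there. *)
From Stdlib Require Import Classical ClassicalEpsilon.
From mathcomp Require Import all_boot.
Set Implicit Arguments. Unset Strict Implicit. Unset Printing Implicit Defensive.

Section Attractor.
Variables (S A : finType) (G : game S A).
Implicit Types (R : {set S}) (s t : S).

Lemma Zk_mono R m n : m <= n -> Zk G R m \subset Zk G R n.
Proof.
elim: n => [|n IH]; first by rewrite leqn0 => /eqP ->.
rewrite leq_eqVlt => /orP [/eqP -> //|]; rewrite ltnS => /IH sub.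
exact: subset_trans sub (subsetUl _ _).
Qed.

Lemma succ_in_subset s a (Z Z' : {set S}) :
  Z \subset Z' -> succ_in G s a Z -> succ_in G s a Z'.
Proof. by rewrite /succ_in => /subsetP sZ; case: (T G s a) => // t /sZ. Qed.

Lemma Zk_succ_subset R R' m n :
  Zk G R m \subset Zk G R' n -> Zk G R m.+1 \subset Zk G R' n.+1.
Proof.
move=> sZ /=; apply: setUSS => //; apply/subsetP => s; rewrite !inE.
case: ifP => _.
  move=> /forallP all_succ; apply/forallP => a; apply/implyP => en.
  exact: succ_in_subset sZ (implyP (all_succ a) en).
by case/existsP => a Ha; apply/existsP; exists a; exact: succ_in_subset sZ Ha.
Qed.

Lemma rank_Some_Zk R t m : rank G R t = Some m -> t \in Zk G R m.
Proof.
rewrite /rank; case: excluded_middle_informative => // W [<-].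
by case: ex_minnP.
Qed.

Lemma in_Win2_rank R t : in_Win2 G R t -> exists m, rank G R t = Some m.
Proof.
by rewrite /rank; case: excluded_middle_informative => // W _; eexists.
Qed.

Lemma rank_lt_in_Win2 R t r : rank_lt (rank G R t) r -> in_Win2 G R t.
Proof.
by case E: (rank G R t) => [m|] // _; exists m; exact: rank_Some_Zk.
Qed.

Lemma in_Win2_Zk_bound R : exists K, forall t, in_Win2 G R t -> t \in Zk G R K.
Proof.
exists (\max_t odflt 0 (rank G R t)) => t /in_Win2_rank [m rt].
apply: subsetP (rank_Some_Zk rt); apply: Zk_mono.
by have := leq_bigmax (F := fun t => odflt 0 (rank G R t)) t; rewrite rt.
Qed.

Lemma in_Win2_trans R R' : (forall r, r \in R -> in_Win2 G R' r) ->
  forall s, in_Win2 G R s -> in_Win2 G R' s.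
Proof.
move=> RW s [k]; have [K bound] := in_Win2_Zk_bound R'.
suff /subsetP sub : Zk G R k \subset Zk G R' (k + K).
  by move=> /sub; exists (k + K).
elim: k {s} => [|k IH]; first by apply/subsetP => r /RW /bound.
exact: Zk_succ_subset.
Qed.

Lemma in_Win2_S1_succ (HG : wf_game G) q a t :
  in_Win2 G (F G) q -> q \in S1 G -> T G q a = Some t -> in_Win2 G (F G) t.
Proof.
case: HG => _ [_ sinkF] [k]; elim: k q => [|k IH] q /=.
  by move=> qF _ Ht; rewrite (sinkF _ _ _ qF Ht); exists 0.
case/setUP => [|]; first exact: IH.
rewrite inE => + q1; rewrite q1 => /forallP /(_ a).
by rewrite /enabled /succ_in => + Ht; rewrite Ht /= => Hk; exists k.
Qed.

End Attractor.

Lemma SR_P1_of_enabled (S A : finType) (G : game S A) (X Y : {set S})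
    (pi1 : S -> A) :
  (forall q, q \in S1 G -> enabled G q (pi1 q)) -> SR_P1 G X Y pi1.
Proof. by move=> en1 q q1; split; [exact: en1 | case; rewrite q1]. Qed.

Section TruePlays.
Variables (S A : finType) (G : game S A) (X Y : {set S}) (pi1 pi2 : S -> A).
Hypothesis HG : wf_game G.
Hypothesis WY : forall y, y \in Y -> in_Win2 G (F G) y.
Hypothesis SR1 : SR_P1 G X Y pi1.
Hypothesis SR2 : SR_P2 G X Y pi2.

Lemma in_Win2_SRAct_succ q a t :
  in_Win2 G (F G) q -> q \notin Y -> SRAct G X Y q a -> T G q a = Some t ->
  in_Win2 G (F G) t.
Proof.
move=> Wq qY [_ descent] Ht.
have [q1|q2] := boolP (q \in S1 G); first exact: in_Win2_S1_succ Wq q1 Ht.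
have [qF|nqF] := boolP (q \in F G).
  by case: HG => _ [_ sinkF]; rewrite (sinkF _ _ _ qF Ht).
have [|t' [Ht' lt_rank]] := descent.
  by do 2!split=> //; rewrite inE negb_or nqF.
move: Ht' lt_rank; rewrite Ht => -[<-] /rank_lt_in_Win2.
by apply: in_Win2_trans => r /setUP [rF|/WY //]; exists 0.
Qed.

Lemma SRAct_joint q : SRAct G X Y q (joint G pi1 pi2 q).
Proof. by rewrite /joint; case: ifP => q1; [exact: SR1 | apply: SR2; rewrite q1]. Qed.

Lemma true_step_hyp_step q q' :
  in_Win2 G (F G) q -> q \notin X :|: Y ->
  TXY G X Y q (joint G pi1 pi2 q) = Some q' -> hyp_step G X Y pi1 q q'.
Proof.
move=> Wq qXY; rewrite /TXY (negbTE qXY) => Hq'.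
have qY : q \notin Y by apply: contra qXY => qY; rewrite inE qY orbT.
split=> //; split; first exact: in_Win2_SRAct_succ Wq qY (SRAct_joint q) Hq'.
exists (joint G pi1 pi2 q); split; first exact: SRAct_joint.
by split=> // q1; rewrite /joint q1.
Qed.

Lemma true_outcome_avoiding_hyp_play s rho :
  in_Win2 G (F G) s -> true_outcome G X Y pi1 pi2 s rho ->
  (forall n, rho n \notin X :|: Y) ->
  forall n, hyp_step G X Y pi1 (rho n) (rho n.+1).
Proof.
move=> Ws [rho0 step] avoid.
suff W n : in_Win2 G (F G) (rho n).
  by move=> n; exact: true_step_hyp_step (W n) (avoid n) (step n).
elim: n => [|n IH]; first by rewrite rho0.
by case: (true_step_hyp_step IH (avoid n) (step n)) => _ [].
Qed.

End TruePlays.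

Theorem theorem1 (S A : finType) (G : game S A) (HG : wf_game G)
  (X Y : {set S})
  (HX : forall x, x \in X -> in_Win2 G (F G) x /\ x \notin F G)
  (HY : forall y, y \in Y -> in_Win2 G (F G) y /\ y \notin F G)
  (HXY : [disjoint X & Y])
  (s : S) (Hs : in_Win2 G (F G) s)
  (pi1 : S -> A)
  (Hpi1 : forall q, q \in S1 G -> enabled G q (pi1 q))
  (Hwin : hyp_sure_winning G X Y pi1 s) :
  stealthy_deceptive_sure_winning G X Y pi1 s.
Proof.
have SR1 := SR_P1_of_enabled X Y Hpi1.
split=> // pi2 SR2 rho Hrho; apply: NNPP => never.
have avoid n : rho n \notin X :|: Y.
  by apply/negP => hit; apply: never; exists n.
have WY y (Yy : y \in Y) := proj1 (HY y Yy).
have [n hit] := Hwin rho (proj1 Hrho)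
  (true_outcome_avoiding_hyp_play HG WY SR1 SR2 Hs Hrho avoid).
by move: (avoid n); rewrite hit.
Qed.
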